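(* Let $\Gamma=(V,E)$ be a graph without isolated vertices and let $k\le 1$ be an integer. If $S$ is a minimal global offensive $k$-alliance in $\Gamma$, then $\overline{S}=V\setminus S$ is a dominating set in $\Gamma$.
   Context: Graphs are finite and simple. For $S\subseteq V$ and $v\in V$, $\delta_S(v)$ is the number of neighbours of $v$ in $S$, $\overline{S}=V\setminus S$, and $\partial(S)$ the set of vertices of $\overline{S}$ with a neighbour in $S$. A nonempty $S$ is an offensive $k$-alliance if $\delta_S(v)\ge\delta_{\overline{S}}(v)+k$ for all $v\in\partial(S)$, and a global offensive $k$-alliance if moreover it is dominating (every vertex of $\overline{S}$ has a neighbour in $S$). A global offensive $k$-alliance $S$ is minimal if no proper subset of $S$ is a global offensive $k$-alliance. *)

From mathcomp Require Import all_boot all_order all_algebra.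
Set Implicit Arguments. Unset Strict Implicit. Unset Printing Implicit Defensive.
Import GRing.Theory Num.Theory.

Definition simple_graph (T : finType) (e : rel T) : Prop :=
  symmetric e /\ irreflexive e.

Definition no_isolated (T : finType) (e : rel T) : Prop :=
  forall v : T, exists u : T, e v u.

Definition deg_in (T : finType) (e : rel T) (S : {set T}) (v : T) : nat :=
  #|[set u in S | e v u]|.

Definition boundary (T : finType) (e : rel T) (S : {set T}) : {set T} :=
  [set v in ~: S | [exists u in S, e v u]].

Definition dominating (T : finType) (e : rel T) (D : {set T}) : Prop :=
  forall v : T, v \notin D -> exists2 u, u \in D & e v u.

Definition offensive_alliance (T : finType) (e : rel T) (k : int) (S : {set T}) : Prop :=
  S != set0 /\
  forall v, v \in boundary e S ->
    ((deg_in e S v)%:Z >= (deg_in e (~: S) v)%:Z + k)%R.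

Definition global_offensive_alliance (T : finType) (e : rel T) (k : int) (S : {set T}) : Prop :=
  offensive_alliance e k S /\ dominating e S.

Definition minimal_global_offensive_alliance (T : finType) (e : rel T) (k : int) (S : {set T}) : Prop :=
  global_offensive_alliance e k S /\
  forall S' : {set T}, S' \proper S -> ~ global_offensive_alliance e k S'.

(** If some [v] in a minimal global offensive [k]-alliance [S] had all its
    neighbours in [S], then [S :\ v] would still be one: [v] itself is dominated
    by any of its neighbours, its degree into [~: (S :\ v)] is [0] while its
    degree into [S :\ v] is at least [1 >= k], and the remaining vertices outside
    [S] are not adjacent to [v], so their degrees into [S] and [~: S] do not
    change. This contradicts minimality. *)

From mathcomp Require Import all_boot all_order all_algebra.
Import Order.TTheory GRing.Theory.

Set Implicit Arguments.
Unset Strict Implicit.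
Unset Printing Implicit Defensive.

Section DegreeUpdates.

Variables (T : finType) (e : rel T).

Lemma deg_inD1 (S : {set T}) (v w : T) :
  ~~ e w v -> deg_in e (S :\ v) w = deg_in e S w.
Proof.
move=> nwv; apply: eq_card => y; rewrite !inE.
by case: eqVneq => [->|] //=; rewrite (negPf nwv) !andbF.
Qed.

Lemma deg_inU1 (A : {set T}) (v w : T) :
  ~~ e w v -> deg_in e (v |: A) w = deg_in e A w.
Proof.
move=> nwv; apply: eq_card => y; rewrite !inE.
by case: eqVneq => [->|] //=; rewrite (negPf nwv) !andbF.
Qed.

End DegreeUpdates.

Section RemoveInnerVertex.

Variables (T : finType) (e : rel T) (S : {set T}) (v u : T).
Hypotheses (esym : symmetric e) (eirr : irreflexive e).
Hypotheses (nbhS : forall x, e v x -> x \in S) (evu : e v u).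

Lemma nonadj_notin w : w \notin S -> ~~ e w v.
Proof. by move=> wS; apply/negP; rewrite esym => /nbhS; rewrite (negPf wS). Qed.

Lemma nbr_in_setD1 : u \in S :\ v.
Proof.
by rewrite !inE nbhS // andbT; apply: contraTneq _ evu => ->; rewrite eirr.
Qed.

Lemma dominating_setD1 : dominating e S -> dominating e (S :\ v).
Proof.
move=> domS w; rewrite !inE negb_and negbK => /orP[/eqP -> | wS].
  by exists u; first exact: nbr_in_setD1.
have [x xS ewx] := domS w wS; exists x => //.
by rewrite !inE xS andbT; apply: contraTneq _ ewx => ->; exact: nonadj_notin.
Qed.

Lemma deg_in_setCD1_self : deg_in e (~: (S :\ v)) v = 0%N.
Proof.
apply/eqP; rewrite cards_eq0; apply/eqP/setP => x; rewrite !inE negb_and negbK.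
case: (boolP (e v x)) => [evx | _]; last by rewrite andbF.
rewrite nbhS // orbF andbT; apply: negbTE.
by apply: contraTneq _ evx => ->; rewrite eirr.
Qed.

Lemma offensive_alliance_setD1 (k : int) :
  (k <= 1)%R -> offensive_alliance e k S -> offensive_alliance e k (S :\ v).
Proof.
move=> k1 [_ offS]; split; first by apply/set0Pn; exists u; exact: nbr_in_setD1.
move=> w; rewrite !inE negb_and negbK => /andP[/orP[/eqP -> _ | wS]].
  rewrite deg_in_setCD1_self add0r (le_trans k1) // lez_nat card_gt0.
  by apply/set0Pn; exists u; rewrite inE nbr_in_setD1.
case/existsP=> x /andP[xS' ewx].
have nwv := nonadj_notin wS.
rewrite deg_inD1 // setCD setUC deg_inU1 //; apply: offS.
by rewrite !inE wS; apply/existsP; exists x; rewrite ewx andbT; case/setD1P: xS'.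
Qed.

Lemma global_offensive_alliance_setD1 (k : int) :
  (k <= 1)%R -> global_offensive_alliance e k S ->
  global_offensive_alliance e k (S :\ v).
Proof.
move=> k1 [offS domS].
by split; [exact: offensive_alliance_setD1 | exact: dominating_setD1].
Qed.

End RemoveInnerVertex.

Theorem mainTheorem8 (T : finType) (e : rel T) (k : int) (S : {set T}) :
  simple_graph e -> no_isolated e -> (k <= 1)%R ->
  minimal_global_offensive_alliance e k S ->
  dominating e (~: S).
Proof.
move=> [esym eirr] noiso k1 [allS minS] v; rewrite inE negbK => vS.
have [u uS | noOut] := pickP [pred x | (x \in ~: S) && e v x].
  by exists u; case/andP: uS.
have nbhS x : e v x -> x \in S.
  by move=> evx; have := noOut x; rewrite /= evx andbT inE => /negbFE.
have [u evu] := noiso v.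
exfalso; apply: (minS (S :\ v)); first exact: properD1.
exact: (global_offensive_alliance_setD1 esym eirr nbhS evu k1 allS).
Qed.
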